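(* Let $f\colon\mathbb{R}^n\to\mathbb{R}$ be convex and differentiable with $\|\nabla f(x)-\nabla f(y)\|\le L\|x-y\|$ (Euclidean norm, $L>0$), with a minimizer $x_\star$, $f_\star=f(x_\star)$. Let $\theta_0=1$ and $\theta_{k+1}>0$ with $\theta_{k+1}^2-\theta_{k+1}=\theta_k^2$ for $k\ge0$. Given $x_0$, let $y_0=x_0$ and for $k\ge0$: $y_{k+1}=x_k-\frac1L\nabla f(x_k)$, $x_{k+1}=y_{k+1}+\frac{\theta_k-1}{\theta_{k+1}}(y_{k+1}-y_k)+\frac{\theta_k}{\theta_{k+1}}(y_{k+1}-x_k)$. Then for $k=1,2,\dots$, \[ f(y_k)-f_\star\le\frac{L\|x_0-x_\star\|^2}{4\theta_{k-1}^2}=\frac{L\|x_0-x_\star\|^2}{(k+\zeta)^2}-\frac{L\|x_0-x_\star\|^2\log k}{(k+\zeta)^3}+o\!\left(\frac1{k^3}\right), \] where $\zeta$ is the constant defined in the context.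
   Context: For this sequence $\{\theta_k\}$ the limit $\zeta:=\lim_{k\to\infty}\big(2\theta_k-k-1-\tfrac12\log k\big)$ exists (so $\theta_k=\frac{k+\zeta+1}{2}+\frac{\log k}{4}+o(1)$), with $\zeta\approx0.646$. $\log$ is the natural logarithm. *)

From HB Require Import structures.
From mathcomp Require Import all_boot all_order all_algebra.
From mathcomp Require Import all_classical all_reals all_analysis.
Set Implicit Arguments. Unset Strict Implicit. Unset Printing Implicit Defensive.
Import Order.TTheory GRing.Theory Num.Theory.
Import numFieldNormedType.Exports.
Local Open Scope ring_scope.

Definition dotv (R : realType) (n : nat) (u v : 'rV[R]_n) : R :=
  \sum_(i < n) u ord0 i * v ord0 i.

Definition enorm (R : realType) (n : nat) (v : 'rV[R]_n) : R :=
  Num.sqrt (dotv v v).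

Definition convex_fun (R : realType) (n : nat) (f : 'rV[R]_n -> R) : Prop :=
  forall (x y : 'rV[R]_n) (t : R), 0 <= t -> t <= 1 ->
    f (t *: x + (1 - t) *: y) <= t * f x + (1 - t) * f y.

Definition is_gradient (R : realType) (n : nat) (f : 'rV[R]_n -> R)
  (g : 'rV[R]_n -> 'rV[R]_n) : Prop :=
  forall x : 'rV[R]_n, differentiable f x /\ forall h, 'd f x h = dotv (g x) h.

From HB Require Import structures.
From mathcomp Require Import all_boot all_order all_algebra.
From mathcomp Require Import all_classical all_reals all_analysis.
From mathcomp Require Import ring lra.
Import Order.TTheory GRing.Theory Num.Theory.
Import numFieldNormedType.Exports.
Local Open Scope classical_set_scope.
Local Open Scope ring_scope.

(* The optimized gradient method is analysed with a Lyapunov function.  Convexity and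
   the descent lemma of an L-smooth f combine into the interpolation inequality
     f u + <g u, v - u> + |g u - g v|^2 / (2L) <= f v,
   which is all the method needs.  With z_k = theta_k x_k - (theta_k - 1) y_k one has
   z_{k+1} = z_k - (2 theta_k / L) g x_k, and the potential
     2 theta_k^2 (f x_k - f_star - |g x_k|^2 / (2L)) + L/2 |z_{k+1} - x_star|^2
   drops from step k to step k+1 by exactly 2 theta_k^2 times the interpolation gap at
   (x_{k+1}, x_k) plus 2 theta_{k+1} times the gap at (x_{k+1}, x_star).  It starts below
   L/2 |x_0 - x_star|^2, and a gradient step gives f y_{k+1} <= f x_k - |g x_k|^2 / (2L).
   For the expansion write 2 theta_{k-1} = a + b with a = k + zeta and
   b = (log k)/2 + c_k, c_k -> 0; then
     1/(a+b)^2 = 1/a^2 - 2b/a^3 + b^2 (3a + 2b) / (a^3 (a+b)^2),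
   and k^3 times the last term is O(log^2 k / k). *)

Section InnerProduct.
Context {R : realType} {n : nat}.
Implicit Types (u v w : 'rV[R]_n) (a : R).

Lemma dotvC u v : dotv u v = dotv v u.
Proof. by apply: eq_bigr => i _; rewrite mulrC. Qed.

Lemma dotvDl u v w : dotv (u + v) w = dotv u w + dotv v w.
Proof. by rewrite /dotv -big_split; apply: eq_bigr => i _; rewrite mxE mulrDl. Qed.

Lemma dotvZl a u v : dotv (a *: u) v = a * dotv u v.
Proof. by rewrite /dotv mulr_sumr; apply: eq_bigr => i _; rewrite mxE mulrA. Qed.

Lemma dotvNl u v : dotv (- u) v = - dotv u v.
Proof. by rewrite -scaleN1r dotvZl mulN1r. Qed.

Lemma dotvBl u v w : dotv (u - v) w = dotv u w - dotv v w.
Proof. by rewrite dotvDl dotvNl. Qed.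

Lemma dotvDr u v w : dotv u (v + w) = dotv u v + dotv u w.
Proof. by rewrite dotvC dotvDl !(dotvC u). Qed.

Lemma dotvZr a u v : dotv u (a *: v) = a * dotv u v.
Proof. by rewrite dotvC dotvZl dotvC. Qed.

Lemma dotvNr u v : dotv u (- v) = - dotv u v.
Proof. by rewrite dotvC dotvNl dotvC. Qed.

Lemma dotvBr u v w : dotv u (v - w) = dotv u v - dotv u w.
Proof. by rewrite dotvDr dotvNr. Qed.

Lemma dotv0l v : dotv 0 v = 0.
Proof. by rewrite -(scale0r (0 : 'rV[R]_n)) dotvZl mul0r. Qed.

Lemma dotv0r u : dotv u 0 = 0.
Proof. by rewrite dotvC dotv0l. Qed.

Definition dotvE := (dotvDl, dotvBl, dotvNl, dotvZl, dotvDr, dotvBr, dotvNr, dotvZr).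

Lemma dotv_sqrB u v : dotv (u - v) (u - v) = dotv u u - 2 * dotv u v + dotv v v.
Proof. by rewrite !dotvE (dotvC v u); ring. Qed.

Lemma dotvv_ge0 u : 0 <= dotv u u.
Proof. by apply: sumr_ge0 => i _; rewrite -expr2 sqr_ge0. Qed.

Lemma dotvv_eq0 u : (dotv u u == 0) = (u == 0).
Proof.
apply/idP/eqP => [|->]; last by rewrite dotv0l.
rewrite psumr_eq0 => [/allP u0|i _]; last by rewrite -expr2 sqr_ge0.
apply/rowP => i; rewrite mxE.
by have /implyP/(_ isT) := u0 i (mem_index_enum i); rewrite -expr2 sqrf_eq0 => /eqP.
Qed.

Lemma enorm_ge0 u : 0 <= enorm u.
Proof. exact: sqrtr_ge0. Qed.

Lemma sqr_enorm u : enorm u ^+ 2 = dotv u u.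
Proof. by rewrite sqr_sqrtr // dotvv_ge0. Qed.

Lemma enorm_eq0 u : (enorm u == 0) = (u == 0).
Proof. by rewrite -sqrf_eq0 sqr_enorm dotvv_eq0. Qed.

Lemma enormZ a u : enorm (a *: u) = `|a| * enorm u.
Proof. by rewrite /enorm dotvZl dotvZr mulrA -expr2 sqrtrM ?sqr_ge0 // sqrtr_sqr. Qed.

Lemma dotv_le_enorm u v : dotv u v <= enorm u * enorm v.
Proof.
set s := enorm u; set t := enorm v.
have : 0 <= dotv (t *: u - s *: v) (t *: u - s *: v) by exact: dotvv_ge0.
rewrite !dotvE -!sqr_enorm -/s -/t (dotvC v u) => expansion.
have [st0|st_gt0] := eqVneq (s * t) 0.
  move: st0 => /eqP; rewrite mulf_eq0 !enorm_eq0 => /orP[] /eqP->;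
  by rewrite (dotv0l, dotv0r) mulr_ge0 ?enorm_ge0.
have st_pos : 0 < s * t by rewrite lt_def st_gt0 mulr_ge0 ?enorm_ge0.
rewrite -(ler_pM2l st_pos); nra.
Qed.

End InnerProduct.

Section SmoothConvex.
Context {R : realType} {n : nat} {f : 'rV[R]_n -> R} {g : 'rV[R]_n -> 'rV[R]_n}.
Hypothesis gradient_fg : is_gradient f g.

Lemma is_derive_line (x h : 'rV[R]_n) (t : R) :
  is_derive t 1 (fun s : R => f (s *: h + x)) (dotv (g (t *: h + x)) h).
Proof.
have [df dg] := gradient_fg (t *: h + x).
have quotientE : (fun s : R => s^-1 *: (f ((s *: 1 + t) *: h + x) - f (t *: h + x)))
    = (fun s : R => s^-1 *: (f (s *: h + (t *: h + x)) - f (t *: h + x))).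
  by apply: funext => s; rewrite [s *: 1]mulr1 scalerDl addrA.
have dh : derivable f (t *: h + x) h by exact: diff_derivable.
apply: DeriveDef; first by rewrite /derivable quotientE.
by rewrite /derive quotientE -dg -deriveE.
Qed.

Hypothesis convex_f : convex_fun f.

Lemma gradient_le (x y : 'rV[R]_n) : f x + dotv (g x) (y - x) <= f y.
Proof.
set h := y - x.
have [dphi] := is_derive_line x h 0; rewrite scale0r add0r => <-.
rewrite -lerBrDl; apply: (cvgr_to_le (cvg_dnbhs_at_right dphi)); near=> t.
have t_gt0 : 0 < t by near: t; exact: nbhs_right_gt.
have t_le1 : t <= 1 by near: t; exact: nbhs_right_le ltr01.
rewrite /= [t%:A]mulr1 addr0 [_ *: _]/(_ * _) ler_pdivrMl // lerBlDr.
have -> : t *: h + x = t *: y + (1 - t) *: x.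
  by apply/rowP => i; rewrite /h !mxE; ring.
rewrite scale0r add0r.
have -> : t * (f y - f x) + f x = t * f y + (1 - t) * f x by ring.
exact: convex_f (ltW t_gt0) t_le1.
Unshelve. all: by end_near. Qed.

Context {L : R}.
Hypothesis lipschitz_g : forall u v, enorm (g u - g v) <= L * enorm (u - v).

Lemma descent_le (x y : 'rV[R]_n) :
  f y <= f x + dotv (g x) (y - x) + L / 2 * dotv (y - x) (y - x).
Proof.
set h := y - x; set c := dotv (g x) h; set d := dotv h h.
(* Mean value theorem for s |-> f (s h + x) minus its quadratic model. *)
pose p : {poly R} := c *: 'X + (L / 2 * d) *: 'X^2.
have pE s : p.[s] = c * s + L / 2 * d * s ^+ 2 by rewrite !hornerE; ring.
have p'E s : (deriv p).[s] = c + L * d * s.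
  by rewrite !poly.derivE !hornerE /=; field.
pose phi (s : R) := f (s *: h + x) - p.[s].
have phi' (s : R) : is_derive s (1 : R) phi (dotv (g (s *: h + x)) h - (deriv p).[s]).
  by have := is_deriveB (is_derive_line x h s) (is_derive_poly p s).
have phi_cont : {within `[0, 1], continuous phi}.
  by apply: derivable_within_continuous => s _; exact: ex_derive.
have [s] := MVT ltr01 (fun s _ => phi' s) phi_cont.
rewrite in_itv /= => /andP[s_gt0 _].
rewrite /phi !pE p'E scale1r scale0r add0r subrK subr0 mulr1 -/h.
have slope : dotv (g (s *: h + x) - g x) h <= L * s * d.
  apply: le_trans (dotv_le_enorm _ _) _.
  rewrite /d -sqr_enorm expr2 mulrA ler_wpM2r ?enorm_ge0 //.
  by have := lipschitz_g (s *: h + x) x; rewrite addrK enormZ gtr0_norm // mulrA.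
move: slope; rewrite dotvBl -/c; lra.
Qed.

Hypothesis L_gt0 : 0 < L.

Lemma cocoercive (x y : 'rV[R]_n) :
  f x + dotv (g x) (y - x) + dotv (g x - g y) (g x - g y) / (2 * L) <= f y.
Proof.
have -> : g x - g y = - (g y - g x) by rewrite opprB.
have dE : dotv (g y) (g y - g x) - dotv (g x) (g y - g x)
          = dotv (g y - g x) (g y - g x) by rewrite -dotvBl.
rewrite dotvNl dotvNr opprK; move: (g y - g x) dE => d dE.
(* Convexity at x and smoothness at y, both evaluated at the gradient step z from y. *)
set z := y - L^-1 *: d.
have lower := gradient_le x z.
have upper := descent_le y z.
have zx : dotv (g x) (z - x) = dotv (g x) (y - x) - L^-1 * dotv (g x) d.
  by rewrite /z addrAC (dotvBr _ (y - x)) dotvZr.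
have zy : dotv (g y) (z - y) + L / 2 * dotv (z - y) (z - y)
          = - (L^-1 * dotv (g y) d) + L^-1 * dotv d d / 2.
  rewrite /z addrAC subrr add0r !(dotvNl, dotvNr, dotvZl, dotvZr) opprK.
  by field; rewrite gt_eqF.
rewrite zx in lower; rewrite -addrA zy in upper.
have -> : dotv d d / (2 * L) = L^-1 * dotv d d / 2 by field; rewrite gt_eqF.
rewrite -dE mulrBr in upper *.
lra.
Qed.

End SmoothConvex.

Section OptimizedGradientMethod.
Context {R : realType} {n : nat} {f : 'rV[R]_n -> R} {g : 'rV[R]_n -> 'rV[R]_n} {L : R}.
Hypothesis L_gt0 : 0 < L.
Hypothesis interpolation : forall u v,
  f u + dotv (g u) (v - u) + dotv (g u - g v) (g u - g v) / (2 * L) <= f v.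

Definition interpolation_gap u v :=
  f v - (f u + dotv (g u) (v - u) + dotv (g u - g v) (g u - g v) / (2 * L)).

Lemma interpolation_gap_ge0 u v : 0 <= interpolation_gap u v.
Proof. by rewrite subr_ge0 interpolation. Qed.

Lemma gradient_step_le u : f (u - L^-1 *: g u) <= f u - dotv (g u) (g u) / (2 * L).
Proof.
set v := u - L^-1 *: g u.
have := interpolation v u; have -> : u - v = L^-1 *: g u by rewrite /v opprB addrC subrK.
rewrite dotvZr dotv_sqrB (dotvC (g v)) -addrA.
have -> : L^-1 * dotv (g u) (g v)
    + (dotv (g v) (g v) - 2 * dotv (g u) (g v) + dotv (g u) (g u)) / (2 * L)
    = dotv (g v) (g v) / (2 * L) + dotv (g u) (g u) / (2 * L).
  by field; rewrite gt_eqF.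
have : 0 <= dotv (g v) (g v) / (2 * L) by rewrite divr_ge0 ?dotvv_ge0 ?mulr_ge0 ?ltW.
lra.
Qed.

Lemma gradient_eq0_at_min {xs : 'rV[R]_n} : (forall v, f xs <= f v) -> g xs = 0.
Proof.
move=> xs_min; apply/eqP; rewrite -dotvv_eq0 eq_le dotvv_ge0 andbT.
have := le_trans (xs_min _) (gradient_step_le xs).
by rewrite lerBrDl gerDr pmulr_lle0 // invr_gt0 mulr_gt0.
Qed.

Variables (theta : nat -> R) (x y : nat -> 'rV[R]_n) (xs : 'rV[R]_n).
Hypothesis theta0 : theta 0%N = 1.
Hypothesis thetaS : forall k, 0 < theta k.+1 /\ theta k.+1 ^+ 2 - theta k.+1 = theta k ^+ 2.
Hypothesis y0 : y 0%N = x 0%N.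
Hypothesis yS : forall k, y k.+1 = x k - L^-1 *: g (x k).
Hypothesis xS : forall k, x k.+1 = y k.+1 + ((theta k - 1) / theta k.+1) *: (y k.+1 - y k)
                                        + (theta k / theta k.+1) *: (y k.+1 - x k).
Hypothesis xs_min : forall v, f xs <= f v.

Definition ogm_z k := theta k *: x k - (theta k - 1) *: y k.

Definition ogm_potential k :=
  2 * theta k ^+ 2 * (f (x k) - f xs - dotv (g (x k)) (g (x k)) / (2 * L))
  + L / 2 * dotv (ogm_z k.+1 - xs) (ogm_z k.+1 - xs).

Lemma theta_gt0 k : 0 < theta k.
Proof. by case: k => [|k]; [rewrite theta0 | case: (thetaS k)]. Qed.

Lemma ogm_zS k : ogm_z k.+1 = ogm_z k - (2 * theta k / L) *: g (x k).
Proof.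
rewrite /ogm_z xS yS; apply/rowP => i; rewrite !mxE.
by field; rewrite !gt_eqF ?theta_gt0.
Qed.

Lemma ogm_potential0 :
  ogm_potential 0 + 2 * interpolation_gap (x 0%N) xs
  = L / 2 * dotv (x 0%N - xs) (x 0%N - xs).
Proof.
have z0 : ogm_z 0%N = x 0%N by rewrite /ogm_z theta0 y0 subrr scale0r subr0 scale1r.
rewrite /ogm_potential /interpolation_gap (gradient_eq0_at_min xs_min) subr0 ogm_zS z0 theta0.
have -> : x 0%N - (2 * 1 / L) *: g (x 0%N) - xs
    = (x 0%N - xs) - (2 * 1 / L) *: g (x 0%N) by rewrite addrAC.
rewrite (dotv_sqrB (x 0%N - xs)) dotvZl !dotvZr -(opprB (x 0%N) xs) dotvNr (dotvC (g _)).
by field; rewrite gt_eqF.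
Qed.

Lemma ogm_potentialS k :
  ogm_potential k.+1 + 2 * theta k ^+ 2 * interpolation_gap (x k.+1) (x k)
    + 2 * theta k.+1 * interpolation_gap (x k.+1) xs
  = ogm_potential k.
Proof.
have [_ thetaE] := thetaS k.
rewrite /ogm_potential /interpolation_gap (gradient_eq0_at_min xs_min) subr0 (ogm_zS k.+1).
have -> : ogm_z k.+1 - (2 * theta k.+1 / L) *: g (x k.+1) - xs
    = (ogm_z k.+1 - xs) - (2 * theta k.+1 / L) *: g (x k.+1) by rewrite addrAC.
rewrite -thetaE; set w := ogm_z k.+1 - xs; rewrite (dotv_sqrB w).
have wE : dotv w ((2 * theta k.+1 / L) *: g (x k.+1)) = 2 * theta k.+1 / L *
    (theta k.+1 * dotv (g (x k.+1)) (x k.+1) - (theta k.+1 - 1) * dotv (g (x k.+1)) (x k)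
     + (theta k.+1 - 1) / L * dotv (g (x k.+1)) (g (x k)) - dotv (g (x k.+1)) xs).
  by rewrite dotvZr dotvC /w /ogm_z yS !dotvE; field; rewrite gt_eqF.
rewrite wE !dotvE !(dotvC _ (g (x k.+1))).
by field; rewrite gt_eqF.
Qed.

Lemma ogm_potential_le k : ogm_potential k <= L / 2 * dotv (x 0%N - xs) (x 0%N - xs).
Proof.
have gap_ge0 := interpolation_gap_ge0.
elim: k => [|k IH]; first by rewrite -ogm_potential0 lerDl mulr_ge0.
apply: le_trans IH; rewrite -(ogm_potentialS k) -addrA lerDl.
by rewrite addr_ge0 // mulr_ge0 // mulr_ge0 ?sqr_ge0 ?ltW ?theta_gt0.
Qed.

Lemma ogm_rate k :
  f (y k.+1) - f xs <= L * dotv (x 0%N - xs) (x 0%N - xs) / (4 * theta k ^+ 2).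
Proof.
set S := dotv (x 0%N - xs) _.
set D := f (x k) - f xs - dotv (g (x k)) (g (x k)) / (2 * L).
have D_le : 2 * theta k ^+ 2 * D <= L / 2 * S.
  apply: le_trans (ogm_potential_le k); rewrite /ogm_potential lerDl.
  by rewrite mulr_ge0 ?dotvv_ge0 // divr_ge0 // ltW.
have y_le : f (y k.+1) - f xs <= D by rewrite yS /D; have := gradient_step_le (x k); lra.
have den_gt0 : 0 < 4 * theta k ^+ 2 by rewrite mulr_gt0 // exprn_gt0 // theta_gt0.
rewrite ler_pdivlMr //; apply: le_trans (ler_wpM2r (ltW den_gt0) y_le) _.
lra.
Qed.

End OptimizedGradientMethod.

Section LogarithmicSequences.
Context {R : realType}.

Lemma invn_cvg0 : (k%:R : R)^-1 @[k --> \oo] --> 0.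
Proof. by rewrite -cvg_shiftS; exact: cvg_harmonic. Qed.

Lemma sqrt_invn_cvg0 : Num.sqrt (k%:R : R)^-1 @[k --> \oo] --> 0.
Proof. by rewrite -sqrtr0; apply: continuous_cvg invn_cvg0; exact: sqrt_continuous. Qed.

Lemma cvgXn {u : nat -> R} {l : R} n : u @ \oo --> l -> u k ^+ n @[k --> \oo] --> l ^+ n.
Proof.
move=> u_cvg; elim: n => [|n IHn].
  by rewrite expr0; under eq_fun do rewrite expr0; exact: cvg_cst.
by rewrite exprS; under eq_fun do rewrite exprS; exact: cvgM.
Qed.

Lemma ln_le_sqrt (x : R) : 0 < x -> ln x <= 2 * Num.sqrt x.
Proof.
move=> x_gt0; have sx_gt0 : 0 < Num.sqrt x by rewrite sqrtr_gt0.
rewrite -{1}(sqr_sqrtr (ltW x_gt0)) lnXn // mulr2n.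
by have := ln_sublinear sx_gt0; lra.
Qed.

Lemma lnSn_sub_cvg0 : ln (k.+1%:R : R) - ln k%:R @[k --> \oo] --> 0.
Proof.
apply: (squeeze_cvgr _ (cvg_cst 0) invn_cvg0); near=> k.
have k_gt0 : 0 < (k%:R : R) by rewrite ltr0n; near: k; exact: nbhs_infty_gt.
have -> : (k.+1%:R : R) = k%:R * (1 + k%:R^-1) by rewrite mulrDr mulr1 mulfV ?gt_eqF // -natr1.
rewrite lnM ?posrE ?addr_gt0 ?invr_gt0 // addrAC subrr add0r.
have kV_ge0 : 0 <= (k%:R : R)^-1 by rewrite invr_ge0 ltW.
rewrite ln_ge0 ?lerDl //=; apply: le_ln1Dx.
by rewrite (lt_le_trans (ltrN10 R)).
Unshelve. all: by end_near. Qed.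

Lemma div_cvg0_of_le_sqrt (u : nat -> R) (c : R) :
  (\forall k \near \oo, 0 <= u k <= c * Num.sqrt k%:R) -> u k / k%:R @[k --> \oo] --> 0.
Proof.
move=> u_bound.
have bound : c * Num.sqrt (k%:R : R)^-1 @[k --> \oo] --> 0.
  by rewrite -(mulr0 c); exact: cvgMl_tmp sqrt_invn_cvg0.
apply: (squeeze_cvgr _ (cvg_cst 0) bound); near=> k.
have k_gt0 : 0 < (k%:R : R) by rewrite ltr0n; near: k; exact: nbhs_infty_gt.
have /andP[u_ge0 u_le] : 0 <= u k <= c * Num.sqrt k%:R by near: k.
have sqrtK : (Num.sqrt (k%:R : R))^-1 * k%:R = Num.sqrt k%:R.
  by rewrite -{2}(sqr_sqrtr (ltW k_gt0)) expr2 mulKf // gt_eqF // sqrtr_gt0.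
by rewrite divr_ge0 ?(ltW k_gt0) //= (sqrtrV (ltW k_gt0)) ler_pdivrMr // -mulrA sqrtK.
Unshelve. all: by end_near. Qed.

Lemma lnn_div_cvg0 : ln (k%:R : R) / k%:R @[k --> \oo] --> 0.
Proof.
apply: (div_cvg0_of_le_sqrt _ 2); near=> k.
have k_ge1 : 1 <= (k%:R : R) by rewrite ler1n; near: k; exact: nbhs_infty_gt.
by rewrite ln_ge0 // ln_le_sqrt // (lt_le_trans ltr01).
Unshelve. all: by end_near. Qed.

Lemma sqr_lnn_div_cvg0 : ln (k%:R : R) ^+ 2 / k%:R @[k --> \oo] --> 0.
Proof.
apply: (div_cvg0_of_le_sqrt _ 16); near=> k.
have k_ge1 : 1 <= (k%:R : R) by rewrite ler1n; near: k; exact: nbhs_infty_gt.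
have sk_gt0 : 0 < Num.sqrt (k%:R : R) by rewrite sqrtr_gt0 (lt_le_trans ltr01).
have lnk_ge0 := ln_ge0 k_ge1.
have : ln (k%:R : R) <= 4 * Num.sqrt (Num.sqrt k%:R).
  rewrite -{1}(sqr_sqrtr (ltW (lt_le_trans ltr01 k_ge1))) lnXn // mulr2n.
  by have := ln_le_sqrt _ sk_gt0; lra.
have := sqr_sqrtr (ltW sk_gt0); have := sqrtr_ge0 (Num.sqrt (k%:R : R)).
by rewrite sqr_ge0 /=; nra.
Unshelve. all: by end_near. Qed.

End LogarithmicSequences.

Section ThetaExpansion.
Context {R : realType} (theta : nat -> R) (zeta : R).
Hypothesis theta_zeta :
  (fun k : nat => 2 * theta k - k%:R - 1 - ln (k%:R) / 2) @ \oo --> zeta.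

Lemma theta_remainder_cvg0 :
  2 * theta k.-1 - (k%:R + zeta) - ln (k%:R : R) / 2 @[k --> \oo] --> 0.
Proof.
have : 2 * theta k - k%:R - 1 - ln k%:R / 2 - zeta - (ln k.+1%:R - ln k%:R) * 2^-1
    @[k --> \oo] --> zeta - zeta - 0 * 2^-1.
  exact: cvgB (cvgB theta_zeta (cvg_cst zeta)) (cvgM lnSn_sub_cvg0 (cvg_cst _)).
rewrite subrr mul0r subr0 => lim0; rewrite -cvg_shiftS.
suff -> : (fun k => 2 * theta k.+1.-1 - (k.+1%:R + zeta) - ln (k.+1%:R : R) / 2)
  = (fun k => 2 * theta k - k%:R - 1 - ln k%:R / 2 - zeta - (ln k.+1%:R - ln k%:R) * 2^-1)
  by [].
by apply/funext => k /=; rewrite -natr1; ring.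
Qed.

Lemma second_order_remainder_cvg0 (C : R) (alpha beta s c : nat -> R) :
  alpha @ \oo --> (1 : R) -> beta @ \oo --> (0 : R) -> s @ \oo --> (0 : R) ->
  c @ \oo --> (0 : R) ->
  C * (alpha k ^+ 3)^-1
    * (s k * (3 * alpha k + 2 * beta k) / (alpha k + beta k) ^+ 2 - 2 * c k)
    @[k --> \oo] --> 0.
Proof.
move=> alpha_cvg beta_cvg s_cvg c_cvg.
have ab_cvg : (fun k => alpha k + beta k) @ \oo --> (1 : R).
  by rewrite -[1]addr0; exact: cvgD.
have one_neq0 m : (1 : R) ^+ m != 0 by rewrite expr1n oner_neq0.
rewrite -(mulr0 (C * (1 ^+ 3)^-1)) -(subrr 0) -[X in X - _](mul0r ((3 * 1 + 2 * 0) / 1 ^+ 2)).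
rewrite -[X in _ - X](mulr0 2) mulrA.
apply: cvgM; first exact: cvgM (cvg_cst _) (cvgV (one_neq0 3%N) (cvgXn 3 alpha_cvg)).
apply: cvgB; last exact: cvgM (cvg_cst _) c_cvg.
apply: cvgM; last by apply: cvgV; [exact: one_neq0 | exact: cvgXn].
apply: cvgM s_cvg _.
by apply: cvgD; apply: cvgM => //; exact: cvg_cst.
Qed.

Lemma theta_expansion (C : R) :
  (fun k : nat => k%:R ^+ 3 *
      (C / (4 * theta k.-1 ^+ 2)
       - (C / (k%:R + zeta) ^+ 2 - C * ln (k%:R) / (k%:R + zeta) ^+ 3)))
    @ \oo --> (0 : R).
Proof.
pose a k := k%:R + zeta; pose b k := 2 * theta k.-1 - a k.
pose c k := b k - ln (k%:R : R) / 2.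
(* For k > 0 these are a k / k, b k / k and b k ^+ 2 / k, in a form exhibiting their limits. *)
pose alpha k := 1 + zeta * k%:R^-1.
pose beta k := ln (k%:R : R) / k%:R / 2 + c k * k%:R^-1.
pose s k := ln (k%:R : R) ^+ 2 / k%:R / 4 + c k * (ln k%:R / k%:R) + c k ^+ 2 * k%:R^-1.
have c_cvg : c @ \oo --> 0 := theta_remainder_cvg0.
have alpha_cvg : alpha @ \oo --> 1 + zeta * 0.
  by apply: cvgD; [exact: cvg_cst | exact: cvgM (cvg_cst _) invn_cvg0].
have beta_cvg : beta @ \oo --> (0 / 2 + 0 * 0 : R).
  by apply: cvgD; [exact: cvgM lnn_div_cvg0 (cvg_cst _) | exact: cvgM c_cvg invn_cvg0].
have s_cvg : s @ \oo --> (0 / 4 + 0 * 0 + 0 ^+ 2 * 0 : R).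
  apply: cvgD; last exact: cvgM (cvgM c_cvg c_cvg) invn_cvg0.
  by apply: cvgD; [exact: cvgM sqr_lnn_div_cvg0 (cvg_cst _) | exact: cvgM c_cvg lnn_div_cvg0].
rewrite mulr0 addr0 in alpha_cvg; rewrite !(mul0r, mulr0, add0r, addr0) in beta_cvg s_cvg.
apply: cvg_trans (second_order_remainder_cvg0 C _ _ _ _ alpha_cvg beta_cvg s_cvg c_cvg).
have ab_pos : \forall k \near \oo, 0 < alpha k + beta k.
  by apply: cvgr_gt ltr01; rewrite -[1]addr0; exact: cvgD.
apply: near_eq_cvg; near=> k.
have k_gt0 : 0 < (k%:R : R) by rewrite ltr0n; near: k; exact: nbhs_infty_gt.
have a_gt0 : 0 < a k.
  have : `|zeta| < k%:R by near: k; exact: nbhs_infty_gtr.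
  by rewrite /a; have := ler_norm (- zeta); rewrite normrN; lra.
have alphaE : alpha k = a k / k%:R by rewrite /alpha /a; field; rewrite gt_eqF.
have betaE : beta k = b k / k%:R by rewrite /beta /c; field; rewrite gt_eqF.
have sE : s k = b k ^+ 2 / k%:R by rewrite /s /c; field; rewrite gt_eqF.
have ab_gt0 : 0 < a k + b k.
  have : 0 < alpha k + beta k by near: k.
  by rewrite alphaE betaE -mulrDl pmulr_lgt0 // invr_gt0.
have thetaE : 4 * theta k.-1 ^+ 2 = (a k + b k) ^+ 2 by rewrite /b; ring.
have lnE : ln (k%:R : R) = 2 * (b k - c k) by rewrite /c; field.
rewrite alphaE betaE sE thetaE lnE -/(a k).
by field; rewrite !gt_eqF.
Unshelve. all: by end_near. Qed.

End ThetaExpansion.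

Theorem corollary1 (R : realType) (n : nat) (f : 'rV[R]_n -> R)
  (gradf : 'rV[R]_n -> 'rV[R]_n) (L : R) (xstar : 'rV[R]_n)
  (theta : nat -> R) (zeta : R) (x y : nat -> 'rV[R]_n) :
  convex_fun f ->
  is_gradient f gradf ->
  0 < L ->
  (forall u v, enorm (gradf u - gradf v) <= L * enorm (u - v)) ->
  (forall u, f xstar <= f u) ->
  theta 0%N = 1 ->
  (forall k : nat, 0 < theta k.+1 /\ theta k.+1 ^+ 2 - theta k.+1 = theta k ^+ 2) ->
  (fun k : nat => 2 * theta k - k%:R - 1 - ln (k%:R) / 2) @ \oo --> zeta ->
  y 0%N = x 0%N ->
  (forall k : nat, y k.+1 = x k - L^-1 *: gradf (x k)) ->
  (forall k : nat, x k.+1 = y k.+1 + ((theta k - 1) / theta k.+1) *: (y k.+1 - y k)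
                                   + (theta k / theta k.+1) *: (y k.+1 - x k)) ->
  let C := L * enorm (x 0%N - xstar) ^+ 2 in
  (forall k : nat, (1 <= k)%N ->
     f (y k) - f xstar <= C / (4 * theta k.-1 ^+ 2)) /\
  (fun k : nat => k%:R ^+ 3 *
      (C / (4 * theta k.-1 ^+ 2)
       - (C / (k%:R + zeta) ^+ 2 - C * ln (k%:R) / (k%:R + zeta) ^+ 3)))
    @ \oo --> (0 : R).
Proof.
move=> convex_f gradient_f L_gt0 lipschitz_g xstar_min theta0 thetaS theta_zeta y0 yS xS C.
split; last exact: theta_expansion.
case=> [//|k] _; rewrite /C sqr_enorm.
have interpolation := cocoercive gradient_f convex_f lipschitz_g L_gt0.
exact: ogm_rate L_gt0 interpolation _ _ _ _ theta0 thetaS y0 yS xS xstar_min k.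
Qed.
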